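(* Let $\mathfrak g=A_2$, $\lambda=m_1\lambda_1+m_2\lambda_2\in\Lambda^+$ and $\mu=u_1\lambda_1+u_2\lambda_2\in\Lambda^+$ with $m^\mu_{\lambda,2}\neq0$. If $m_1\ge m_2$ then $u_1+2u_2\ge2(m_1-m_2)$; if $m_1\le m_2$ then $2u_1+u_2\ge2(m_2-m_1)$.
   Context: $A_2=\mathfrak{sl}_3$ with fundamental weights $\lambda_1,\lambda_2$ and dominant weights $\Lambda^+=\mathbb N\lambda_1+\mathbb N\lambda_2$. The plethysm multiplicities $m^\mu_{\lambda,2}$ are defined by $\psi_2(\mathrm{ch}_\lambda)=\sum_{\mu\in\Lambda^+}m^\mu_{\lambda,2}\mathrm{ch}_\mu$, with $\mathrm{ch}_\lambda$ the formal character of the irreducible representation $V_\lambda$ and $\psi_2(e_\nu)=e_{2\nu}$. *)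

From HB Require Import structures.
From mathcomp Require Import all_boot all_order all_algebra.
Set Implicit Arguments. Unset Strict Implicit. Unset Printing Implicit Defensive.
Import Order.TTheory GRing.Theory Num.Theory.

(* Weights of A_2 = sl_3 are written in the basis of fundamental weights:
   the pair (x, y) : int * int stands for x*lambda_1 + y*lambda_2.
   A formal character is the function nu |-> (coefficient of e_nu). *)

(* Weight multiplicity of the weight x*l1 + y*l2 in the irreducible
   sl_3-module V_lambda, lambda = m1*l1 + m2*l2, computed by counting
   Gelfand-Tsetlin patterns with top row (a1,a2,a3) = (m1+m2, m2, 0):
   second row (b1,b2) with a1 >= b1 >= a2 >= b2 >= 0, third row c with
   b1 >= c >= b2.  Content: c ones, b1+b2-c twos, a1+a2-b1-b2 threes; the
   weight is (c1-c2)*l1 + (c2-c3)*l2. *)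
Definition wmult (m1 m2 : nat) (x y : int) : nat :=
  \sum_(b1 < (m1 + m2).+1 | (m2 <= b1)%N)
    \sum_(b2 < m2.+1)
      \sum_(c < b1.+1 | (b2 <= c)%N)
        ((2 * (c : nat)%:Z - (b1 : nat)%:Z - (b2 : nat)%:Z == x)%R &&
         (2 * ((b1 : nat)%:Z + (b2 : nat)%:Z) - (c : nat)%:Z
            - (m1 + 2 * m2)%:Z == y)%R : nat).

Definition ch (m1 m2 : nat) (x y : int) : int := (wmult m1 m2 x y)%:Z.

(* The Adams operation psi_2 (e_nu |-> e_{2 nu}) on formal characters. *)
Definition psi2 (f : int -> int -> int) (x y : int) : int :=
  if ((2 %| x)%Z && (2 %| y)%Z) then f (x %/ 2)%Z (y %/ 2)%Z else 0%R.

Definition plethysm_decomp (m1 m2 : nat) (mult : nat -> nat -> int) (N : nat)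
  : Prop :=
  (forall u1 u2 : nat, (N <= u1)%N || (N <= u2)%N -> mult u1 u2 = 0%R) /\
  (forall x y : int,
     psi2 (ch m1 m2) x y =
     (\sum_(u1 < N) \sum_(u2 < N) mult u1 u2 * ch u1 u2 x y)%R).

(** By the Weyl character formula, the multiplicity of [V_u] in a virtual
    character [f] of [sl_3] is the alternating sum over the Weyl group
    [sum_w sign(w) f(u + rho - w rho)].  For [f = psi_2(ch_lambda)] only weights
    with both coordinates even contribute, so according to the parities of
    [u1] and [u2] the six terms reduce to at most two weight multiplicities of
    [V_lambda], at two weights differing by a root.  When [u] violates the
    bound, both weights lie in the inner region where the multiplicity
    [1 + min(m1, m2, k1, k2)] of [lambda - k1 alpha1 - k2 alpha2] is saturated
    at [1 + min(m1, m2)], so the two terms cancel. *)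

From HB Require Import structures.
From mathcomp Require Import all_boot all_order all_algebra zify.
Set Implicit Arguments. Unset Strict Implicit. Unset Printing Implicit Defensive.
Import Order.TTheory GRing.Theory Num.Theory.
Local Open Scope ring_scope.

Lemma sum_ord_in_interval (n : nat) (lo hi : int) :
  (\sum_(i < n) ((lo <= (i : nat)%:Z)%R && ((i : nat)%:Z <= hi)%R : nat))%N%:Z
  = Num.max 0 (Num.min hi (n%:Z - 1) - Num.max lo 0 + 1).
Proof.
elim: n => [|n IH]; first by rewrite big_ord0; lia.
rewrite big_ord_recr /= PoszD IH; lia.
Qed.

Lemma sum_ord_point (n : nat) (k : int) (b : bool) :
  (\sum_(i < n) (((i : nat)%:Z == k)%R && b : nat))%N%:Z
  = ((0 <= k)%R && (k < n%:Z)%R && b : nat)%:Z.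
Proof.
elim: n => [|n IH]; first by rewrite big_ord0; lia.
rewrite big_ord_recr /= PoszD IH; lia.
Qed.

Ltac case_min_max := repeat (match goal with
 | |- context[Num.min ?x ?y] => case: (leP x y) => ?
 | |- context[Num.max ?x ?y] => case: (leP x y) => ?
 end; try (exfalso; lia)).

(* Once the weight is fixed, the third row of a pattern is [c = C] and its
   second row satisfies [b1 + b2 = S]; this counts the admissible [b1]. *)
Definition gt_count (m1 m2 : nat) (C S : int) : int :=
  Num.max 0 (Num.min (m1 + m2)%:Z S
             - Num.max (Num.max m2%:Z C) (Num.max (S - m2%:Z) (S - C)) + 1).

Lemma wmultE (m1 m2 : nat) (x y C : int) :
  3 * C = 2 * x + y + (m1 + 2 * m2)%:Z ->
  (wmult m1 m2 x y)%:Z = gt_count m1 m2 C (2 * C - x).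
Proof.
move=> HC; set S := 2 * C - x; rewrite /wmult.
have sum_c (b1 : 'I_(m1 + m2).+1) (b2 : 'I_m2.+1) :
  \sum_(c < b1.+1 | (b2 <= c)%N)
     ((2 * (c : nat)%:Z - (b1 : nat)%:Z - (b2 : nat)%:Z == x) &&
      (2 * ((b1 : nat)%:Z + (b2 : nat)%:Z) - (c : nat)%:Z - (m1 + 2 * m2)%:Z == y) : nat)
  = ((b2 : nat)%:Z <= C <= (b1 : nat)%:Z) && ((b1 : nat)%:Z + (b2 : nat)%:Z == S) :> nat.
  apply/eqP; rewrite -eqz_nat big_mkcond /=.
  rewrite (eq_bigr (fun c : 'I_b1.+1 => ((c : nat)%:Z == C) &&
             (((b2 : nat)%:Z <= C) && ((b1 : nat)%:Z + (b2 : nat)%:Z == S)) : nat)); last first.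
    by move=> c _; case: leqP; rewrite /S; lia.
  by rewrite sum_ord_point; apply/eqP; lia.
rewrite (eq_bigr _ (fun b1 _ => eq_bigr _ (fun b2 _ => sum_c b1 b2))) {sum_c}.
have sum_b2 (b1 : 'I_(m1 + m2).+1) :
  \sum_(b2 < m2.+1) (((b2 : nat)%:Z <= C <= (b1 : nat)%:Z) && ((b1 : nat)%:Z + (b2 : nat)%:Z == S) : nat)
  = (0 <= S - (b1 : nat)%:Z <= m2%:Z) && (S - (b1 : nat)%:Z <= C <= (b1 : nat)%:Z) :> nat.
  apply/eqP; rewrite -eqz_nat.
  rewrite (eq_bigr (fun b2 : 'I_m2.+1 => ((b2 : nat)%:Z == S - (b1 : nat)%:Z) &&
             (S - (b1 : nat)%:Z <= C <= (b1 : nat)%:Z) : nat)); last by move=> b2 _; lia.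
  by rewrite sum_ord_point; apply/eqP; lia.
rewrite (eq_bigr _ (fun b1 _ => sum_b2 b1)) {sum_b2} big_mkcond /=.
rewrite (eq_bigr (fun b1 : 'I_(m1 + m2).+1 =>
           (Num.max (Num.max m2%:Z C) (Num.max (S - m2%:Z) (S - C)) <= (b1 : nat)%:Z) &&
           ((b1 : nat)%:Z <= S) : nat)); last by move=> b1 _; case: leqP; lia.
by rewrite sum_ord_in_interval /gt_count; lia.
Qed.

Lemma ch_eq0 (n1 n2 : nat) (x y : int) :
  ~~ (3 %| 2 * (n1%:Z - x) + (n2%:Z - y))%Z -> ch n1 n2 x y = 0.
Proof.
move=> nd; rewrite /ch /wmult big1 // => b1 _; rewrite big1 // => b2 _; rewrite big1 // => c _; lia.
Qed.

(* The multiplicity of the dominant weight [lambda - k1 alpha1 - k2 alpha2] in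
   [V_lambda], [lambda = n1 lambda1 + n2 lambda2]. *)
Definition dom_wmult (n1 n2 : nat) (k1 k2 : int) : int :=
  Num.max 0 (1 + Num.min (Num.min n1%:Z n2%:Z) (Num.min k1 k2)).

(* The hypotheses on [x, y] cover the six weights [u + rho - w rho] of a
   dominant [u]. *)
Lemma ch_near_dominant (n1 n2 : nat) (x y k1 k2 : int) :
  -1 <= x -> -1 <= y -> 0 <= x + y ->
  3 * k1 = 2 * (n1%:Z - x) + (n2%:Z - y) -> 3 * k2 = (n1%:Z - x) + 2 * (n2%:Z - y) ->
  ch n1 n2 x y = dom_wmult n1 n2 k1 k2.
Proof.
move=> hx hy hxy h1 h2; rewrite /ch (@wmultE _ _ _ _ ((n1 + n2)%:Z - k1)); last by lia.
rewrite /gt_count /dom_wmult; case_min_max; lia.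
Qed.

Lemma dom_wmult_alt (n1 n2 : nat) (k1 k2 : int) :
  2 * k1 - n1%:Z <= k2 -> 2 * k2 - n2%:Z <= k1 ->
  dom_wmult n1 n2 k1 k2 - dom_wmult n1 n2 (k1 - 1) k2 - dom_wmult n1 n2 k1 (k2 - 1)
  + dom_wmult n1 n2 (k1 - 2) (k2 - 1) + dom_wmult n1 n2 (k1 - 1) (k2 - 2)
  - dom_wmult n1 n2 (k1 - 2) (k2 - 2) = ((k1 == 0) && (k2 == 0) : nat)%:Z.
Proof.
move=> h1 h2; rewrite /dom_wmult.
by case: (eqVneq k1 0) => ?; case: (eqVneq k2 0) => ? /=; case_min_max; lia.
Qed.

(* [sum_w sign(w) f(u + rho - w rho)], the shifts [rho - w rho] being written
   in the basis of fundamental weights. *)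
Definition weyl_alt (f : int -> int -> int) (u1 u2 : int) : int :=
  f u1 u2 - f (u1 + 2) (u2 - 1) - f (u1 - 1) (u2 + 2)
  + f (u1 + 3) u2 + f u1 (u2 + 3) - f (u1 + 2) (u2 + 2).

Lemma weyl_alt_ch (n1 n2 u1 u2 : nat) :
  weyl_alt (ch n1 n2) u1%:Z u2%:Z = ((n1 == u1) && (n2 == u2) : nat)%:Z.
Proof.
have [/dvdzP [k1 hk1] | nd] := boolP (3 %| 2 * (n1%:Z - u1%:Z) + (n2%:Z - u2%:Z))%Z; last first.
  rewrite /weyl_alt !ch_eq0; [| lia ..].
  by have -> : (n1 == u1) && (n2 == u2) = false by lia.
set k2 := (n1%:Z - u1%:Z) + (n2%:Z - u2%:Z) - k1.
rewrite /weyl_alt (@ch_near_dominant _ _ _ _ k1 k2); [| lia ..].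
rewrite (@ch_near_dominant _ _ (u1%:Z + 2) _ (k1 - 1) k2); [| lia ..].
rewrite (@ch_near_dominant _ _ (u1%:Z - 1) _ k1 (k2 - 1)); [| lia ..].
rewrite (@ch_near_dominant _ _ (u1%:Z + 3) _ (k1 - 2) (k2 - 1)); [| lia ..].
rewrite (@ch_near_dominant _ _ u1%:Z (u2%:Z + 3) (k1 - 1) (k2 - 2)); [| lia ..].
rewrite (@ch_near_dominant _ _ (u1%:Z + 2) (u2%:Z + 2) (k1 - 2) (k2 - 2)); [| lia ..].
rewrite dom_wmult_alt; [| lia ..].
by congr (Posz (nat_of_bool _)); lia.
Qed.

Lemma sum_ord_mul_eq (N u : nat) (G : nat -> int) :
  \sum_(a < N) G a * ((a : nat) == u : nat)%:Z = ((u < N)%N : nat)%:Z * G u.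
Proof.
have [hu | hu] := ltnP u N.
  rewrite (bigD1 (Ordinal hu)) //= eqxx mulr1 mul1r big1 ?addr0 // => a /eqP ne.
  by rewrite (_ : (a : nat) == u = false) ?mulr0 //; apply/eqP => e; apply/ne/val_inj.
rewrite mul0r big1 // => a _.
by rewrite (_ : (a : nat) == u = false) ?mulr0 //; have := ltn_ord a; lia.
Qed.

Lemma plethysm_decomp_multE (m1 m2 : nat) (mult : nat -> nat -> int) (N u1 u2 : nat) :
  plethysm_decomp m1 m2 mult N -> mult u1 u2 = weyl_alt (psi2 (ch m1 m2)) u1%:Z u2%:Z.
Proof.
move=> [supp dec].
have -> : weyl_alt (psi2 (ch m1 m2)) u1%:Z u2%:Z
          = \sum_(a < N) \sum_(b < N) mult a b * weyl_alt (ch a b) u1%:Z u2%:Z.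
  rewrite /weyl_alt !dec; symmetry.
  under eq_bigr => a _ do under eq_bigr => b _ do rewrite !(mulrBr, mulrDr).
  under eq_bigr => a _ do rewrite !(sumrB, big_split) /=.
  by rewrite !(sumrB, big_split).
under eq_bigr => a _.
  under eq_bigr => b _.
    rewrite weyl_alt_ch (_ : (((a : nat) == u1) && ((b : nat) == u2) : nat)%:Z
                           = ((a : nat) == u1 : nat)%:Z * ((b : nat) == u2 : nat)%:Z); last first.
      by case: eqP; case: eqP.
    rewrite mulrA.
    over.
  rewrite (sum_ord_mul_eq _ _ (fun b => mult a b * ((a : nat) == u1 : nat)%:Z)) /=.
  over.
rewrite -mulr_sumr (sum_ord_mul_eq _ _ (mult^~ u2)).
have [h1 | h1] := ltnP u1 N; have [h2 | h2] := ltnP u2 N; rewrite ?mul1r ?mul0r ?mulr0 //.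
all: by rewrite supp // ?h1 ?h2 ?orbT.
Qed.

Lemma psi2_halve (f : int -> int -> int) (x y : int) :
  (x %% 2 = 0)%Z -> (y %% 2 = 0)%Z -> psi2 f x y = f (x %/ 2)%Z (y %/ 2)%Z.
Proof. by move=> /dvdz_mod0P hx /dvdz_mod0P hy; rewrite /psi2 hx hy. Qed.

Lemma psi2_oddl (f : int -> int -> int) (x y : int) : (x %% 2 = 1)%Z -> psi2 f x y = 0.
Proof. by move=> hx; rewrite /psi2 (_ : (2 %| x)%Z = false) //; apply/dvdz_mod0P; rewrite hx. Qed.

Lemma psi2_oddr (f : int -> int -> int) (x y : int) : (y %% 2 = 1)%Z -> psi2 f x y = 0.
Proof. by move=> hy; rewrite /psi2 (_ : (2 %| y)%Z = false) ?andbF //; apply/dvdz_mod0P; rewrite hy. Qed.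

Ltac eval_psi2 := repeat match goal with
  | |- context [psi2 ?f ?x ?y] =>
      first [ rewrite (@psi2_oddl f x y); last by lia
            | rewrite (@psi2_oddr f x y); last by lia
            | rewrite (@psi2_halve f x y); [| by lia | by lia] ]
  end.

Section WeylAltPsi2.
Variables (f : int -> int -> int) (p q : int).

Lemma weyl_alt_psi2_even_even :
  weyl_alt (psi2 f) (2 * p) (2 * q) = f p q - f (p + 1) (q + 1).
Proof. rewrite /weyl_alt; eval_psi2; rewrite !(subr0, addr0); congr (f _ _ - f _ _); lia. Qed.

Lemma weyl_alt_psi2_even_odd :
  weyl_alt (psi2 f) (2 * p) (2 * q + 1) = f p (q + 2) - f (p + 1) q.
Proof.
rewrite /weyl_alt; eval_psi2; rewrite !(subr0, addr0, sub0r, add0r) addrC.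
congr (f _ _ - f _ _); lia.
Qed.

Lemma weyl_alt_psi2_odd_even :
  weyl_alt (psi2 f) (2 * p + 1) (2 * q) = f (p + 2) q - f p (q + 1).
Proof.
rewrite /weyl_alt; eval_psi2; rewrite !(subr0, addr0, sub0r, add0r) addrC.
congr (f _ _ - f _ _); lia.
Qed.

Lemma weyl_alt_psi2_odd_odd : weyl_alt (psi2 f) (2 * p + 1) (2 * q + 1) = 0.
Proof. by rewrite /weyl_alt; eval_psi2; rewrite !(subr0, addr0). Qed.

End WeylAltPsi2.

(* [(x', y') = (x, y) - d1 alpha1 - d2 alpha2], with [alpha1 = (2, -1)] and
   [alpha2 = (-1, 2)]. *)
Lemma ch_eq_root_shift (n1 n2 : nat) (x y x' y' d1 d2 : int) :
  0 <= x -> 0 <= y -> 0 <= x' -> 0 <= y' ->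
  x' = x - 2 * d1 + d2 -> y' = y + d1 - 2 * d2 ->
  (forall k1 k2 : int, x = n1%:Z - 2 * k1 + k2 -> y = n2%:Z + k1 - 2 * k2 ->
     dom_wmult n1 n2 k1 k2 = dom_wmult n1 n2 (k1 + d1) (k2 + d2)) ->
  ch n1 n2 x y = ch n1 n2 x' y'.
Proof.
move=> hx hy hx' hy' ex ey hdom.
have [/dvdzP [k1 hk1] | nd] := boolP (3 %| 2 * (n1%:Z - x) + (n2%:Z - y))%Z; last first.
  by rewrite !ch_eq0 //; lia.
set k2 := (n1%:Z - x) + (n2%:Z - y) - k1.
rewrite (@ch_near_dominant _ _ _ _ k1 k2); [| lia ..].
rewrite (@ch_near_dominant _ _ _ _ (k1 + d1) (k2 + d2)); [| lia ..].
apply: hdom; lia.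
Qed.

Definition below_bound (m1 m2 : nat) (u1 u2 : int) : Prop :=
  ((m2 <= m1)%N /\ u1 + 2 * u2 < 2 * (m1%:Z - m2%:Z)) \/
  ((m1 <= m2)%N /\ 2 * u1 + u2 < 2 * (m2%:Z - m1%:Z)).

Section ChShift.
Variables (m1 m2 : nat) (p q : int).
Hypotheses (hp : 0 <= p) (hq : 0 <= q).

Lemma ch_shift_even_even :
  below_bound m1 m2 (2 * p) (2 * q) -> ch m1 m2 p q = ch m1 m2 (p + 1) (q + 1).
Proof.
move=> hb; apply: (ch_eq_root_shift (d1 := -1) (d2 := -1)); try lia.
by move=> k1 k2 e1 e2; rewrite /dom_wmult; case: hb => -[? ?]; case_min_max; lia.
Qed.

Lemma ch_shift_even_odd :
  below_bound m1 m2 (2 * p) (2 * q + 1) -> ch m1 m2 p (q + 2) = ch m1 m2 (p + 1) q.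
Proof.
move=> hb; apply: (ch_eq_root_shift (d1 := 0) (d2 := 1)); try lia.
by move=> k1 k2 e1 e2; rewrite /dom_wmult; case: hb => -[? ?]; case_min_max; lia.
Qed.

Lemma ch_shift_odd_even :
  below_bound m1 m2 (2 * p + 1) (2 * q) -> ch m1 m2 (p + 2) q = ch m1 m2 p (q + 1).
Proof.
move=> hb; apply: (ch_eq_root_shift (d1 := 1) (d2 := 0)); try lia.
by move=> k1 k2 e1 e2; rewrite /dom_wmult; case: hb => -[? ?]; case_min_max; lia.
Qed.

End ChShift.

Lemma weyl_alt_psi2_ch_eq0 (m1 m2 : nat) (u1 u2 : int) :
  0 <= u1 -> 0 <= u2 -> below_bound m1 m2 u1 u2 -> weyl_alt (psi2 (ch m1 m2)) u1 u2 = 0.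
Proof.
move=> h1 h2.
have [p [hp [->|->]]] : exists p, 0 <= p /\ (u1 = 2 * p \/ u1 = 2 * p + 1).
  by exists (u1 %/ 2)%Z; lia.
all: have [q [hq [->|->]]] : exists q, 0 <= q /\ (u2 = 2 * q \/ u2 = 2 * q + 1).
all: try by exists (u2 %/ 2)%Z; lia.
- by move=> hb; rewrite weyl_alt_psi2_even_even ch_shift_even_even ?subrr.
- by move=> hb; rewrite weyl_alt_psi2_even_odd ch_shift_even_odd ?subrr.
- by move=> hb; rewrite weyl_alt_psi2_odd_even ch_shift_odd_even ?subrr.
- by rewrite weyl_alt_psi2_odd_odd.
Qed.

Theorem mainTheorem15 (m1 m2 u1 u2 : nat) (mult : nat -> nat -> int) (N : nat) :
  plethysm_decomp m1 m2 mult N ->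
  mult u1 u2 <> 0%R ->
  ((m2 <= m1)%N -> (2 * (m1 - m2) <= u1 + 2 * u2)%N) /\
  ((m1 <= m2)%N -> (2 * (m2 - m1) <= 2 * u1 + u2)%N).
Proof.
move=> dec; rewrite (plethysm_decomp_multE u1 u2 dec) => hne.
have not_below : ~ below_bound m1 m2 u1%:Z u2%:Z.
  by move=> hb; apply: hne; apply: weyl_alt_psi2_ch_eq0.
by split => hm; rewrite leqNgt; apply/negP => hlt; apply: not_below; rewrite /below_bound; lia.
Qed.
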